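(* Let $\ell$ be an odd prime and fix $t\in\mathbb{Z}$. For $m\in\mathbb{Z}_{\ge1}$ define \[ \widetilde{\psi}_t^{(\ell)}(m) := \frac{1}{\varphi(m^2)} \sum_{\substack{n \bmod m^2\\ (n,m)=1}} \psi_{t^2 - 4\ell n}(m). \] Then the function $m\mapsto \widetilde{\psi}_t^{(\ell)}(m)$ is multiplicative.
   Context: For an integer $D=dL^2$ with $d$ a fundamental discriminant and $L\in\mathbb{Z}_{\ge0}$, $\psi_D(m):=\big(\tfrac{d}{m/(m,L)}\big)$ is a Kronecker symbol, with the convention $\psi_0(m)=1$. Here $\varphi$ is Euler's totient function, and the sum runs over residue classes $n$ modulo $m^2$ coprime to $m$. *)

From mathcomp Require Import all_boot all_order all_algebra.
Set Implicit Arguments. Unset Strict Implicit. Unset Printing Implicit Defensive.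
Import Order.TTheory GRing.Theory Num.Theory.
Local Open Scope ring_scope.

Definition sqfree_int (k : int) : bool :=
  (k != 0) && [forall p : 'I_(`|k|%N).+1, (1 < p)%N ==> ~~ ((p * p)%N %| `|k|%N)%N].

Definition fund_disc (d : int) : bool :=
  (modz d 4 == 1) && sqfree_int d
  || ((d \in dvdz 4) && (modz (divz d 4) 4 \in [:: 2; 3]) && sqfree_int (divz d 4)).

Definition legendre (a : int) (p : nat) : int :=
  let r := `|modz a p%:Z|%N in
  if r == 0%N then 0
  else if [exists x : 'I_p, ((x * x) %% p)%N == r] then 1 else -1.

Definition kron2 (a : int) : int :=
  if a \in dvdz 2 then 0
  else if (modz a 8 == 1) || (modz a 8 == 7) then 1 else -1.

Definition kron_prime (a : int) (p : nat) : int :=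
  if p == 2%N then kron2 a else legendre a p.

Definition kronecker (a : int) (n : nat) : int :=
  if n == 0%N then (if `|a|%N == 1%N then 1 else 0)
  else \prod_(p <- primes n) kron_prime a p ^+ logn p n.

(* For D = d L^2 (D != 0) with d fundamental, L >= 1 the (unique) conductor. *)
Definition disc_cond (D : int) : nat :=
  \max_(1 <= L < `|D|%N.+1 | ((L * L)%N %| `|D|%N)%N
                             && fund_disc (divz D (L * L)%N%:Z)) L.

Definition disc_fund (D : int) : int := divz D (disc_cond D * disc_cond D)%N%:Z.

Definition psi (D : int) (m : nat) : int :=
  if D == 0 then 1
  else kronecker (disc_fund D) (m %/ gcdn m (disc_cond D))%N.

Definition psit (l : nat) (t : int) (m : nat) : rat :=
  (totient (m * m))%:R^-1 *
  \sum_(n < (m * m)%N | coprime n m) ((psi (t ^+ 2 - 4 * l%:Z * n%:Z) m)%:~R : rat).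

From mathcomp Require Import all_boot all_order all_algebra zify ring.
Set Implicit Arguments. Unset Strict Implicit. Unset Printing Implicit Defensive.
Import Order.TTheory GRing.Theory Num.Theory.
Local Open Scope ring_scope.

(* For a discriminant D = d L^2, psi_D(m) = (d / (m/(m,L))) is a product over
   the primes p | m of local factors, hence multiplicative in m.  The p-factor
   only involves v_p(L) and (d/p), and both can be read off from v_p(D) and the
   p-free part of D modulo p (modulo 8 if p = 2); so psi_D(m) only depends on
   D modulo 4 m^2.  As D = t^2 - 4 l n moves by a multiple of 4 m^2 when n
   moves by a multiple of m^2, the Chinese remainder theorem splits the average
   over n mod (m1 m2)^2 into the product of the averages over n mod m1^2 and
   n mod m2^2. *)

Definition is_disc (D : int) : bool := (modz D 4 == 0) || (modz D 4 == 1).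

Lemma is_disc_sqr_sub4 (t x : int) : is_disc (t ^+ 2 - 4 * x).
Proof.
have t2 : modz (t ^+ 2) 4 = modz (modz t 4 * modz t 4) 4 by rewrite modzMm expr2.
rewrite /is_disc.
have : modz t 4 = 0 \/ modz t 4 = 1 \/ modz t 4 = 2 \/ modz t 4 = 3 by lia.
by case=> [e|[e|[e|e]]]; rewrite e /= in t2; lia.
Qed.

Lemma sqfree_intP k q : sqfree_int k -> (1 < q)%N -> ~~ (q * q %| `|k|)%N.
Proof.
case/andP=> k0 /forallP sqf q1; apply/negP => qqk.
have qk : (q < `|k|.+1)%N.
  rewrite ltnS (leq_trans (leq_pmull _ (ltnW q1))) //.
  by rewrite dvdn_leq // absz_gt0.
by have := sqf (Ordinal qk); rewrite /= q1 qqk.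
Qed.

Lemma not_sqfree_int k : k != 0 -> ~~ sqfree_int k ->
  exists2 q : nat, (1 < q)%N & ((q * q)%N%:Z %| k)%Z.
Proof.
move=> k0; rewrite /sqfree_int k0 => /forallPn [q].
by rewrite negb_imply negbK => /andP[q1 qqk]; exists q.
Qed.

Lemma sqr_odd_mod8 (q : nat) : odd q -> exists r : int, (q * q)%N%:Z = 8 * r + 1.
Proof.
move=> oq; rewrite -[q]odd_double_half oq; set r := q./2.
have even_rr1 : (r * (r + 1) = (r * (r + 1))./2.*2)%N.
  by rewrite -{1}[(r * _)%N]odd_double_half oddM oddD /=; case: (odd r).
by exists ((r * (r + 1))./2)%:Z; lia.
Qed.

Lemma odd_of_sqr_dvdz (q : nat) (X : int) :
  ((q * q)%N%:Z %| X)%Z -> ~~ (4 %| X)%Z -> odd q.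
Proof.
move=> qqX; apply: contraR => /negbTE even_q; apply: dvdz_trans qqX.
rewrite dvdzE /= -[q]odd_double_half even_q add0n -muln2 mulnACA.
by rewrite dvdn_mull.
Qed.

Lemma nonfund_disc_sqr_factor D : D != 0 -> is_disc D -> ~~ fund_disc D ->
  exists2 q : nat, (1 < q)%N & exists2 D1, D = D1 * (q * q)%N%:Z & is_disc D1.
Proof.
move=> D0; case/orP=> [/eqP D0mod4 | /eqP D1mod4] nfund.
  have D4E : D = divz D 4 * 4 by lia.
  have [D4disc | D4nodisc] := boolP (is_disc (divz D 4)).
    by exists 2%N => //; exists (divz D 4).
  have D4sqf : ~~ sqfree_int (divz D 4).
    apply: contra nfund => sqf; apply/orP; right; rewrite sqf andbT.
    apply/andP; split; first by apply/dvdzP; exists (divz D 4).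
    by rewrite !inE; move: D4nodisc; rewrite /is_disc; lia.
  have [q q1 /dvdzP [c cE]] := not_sqfree_int (ltac:(lia) : divz D 4 != 0) D4sqf.
  exists q => //; exists (4 * c); last by rewrite /is_disc; lia.
  by rewrite D4E cE; ring.
have Dsqf : ~~ sqfree_int D.
  by apply: contra nfund => sqf; rewrite /fund_disc D1mod4 sqf.
have [q q1 qqD] := not_sqfree_int D0 Dsqf.
have [r rE] := sqr_odd_mod8 (odd_of_sqr_dvdz qqD ltac:(apply/negP; lia)).
move/dvdzP: qqD => [D1 D1E]; exists q => //; exists D1 => //.
by rewrite /is_disc; move: D1mod4; rewrite D1E rE; lia.
Qed.

Lemma fund_disc_decomp D : D != 0 -> is_disc D ->
  exists L d, [/\ (0 < L)%N, D = d * (L * L)%N%:Z & fund_disc d].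
Proof.
elim: {D}`|D|%N {-2}D (leqnn `|D|%N) => [|n IHn] D Dn D0 Ddisc.
  by move: Dn; rewrite leqn0 absz_eq0 (negbTE D0).
have [fund | nfund] := boolP (fund_disc D).
  by exists 1%N, D; rewrite mulr1.
have [q q1 [D1 D1E D1disc]] := nonfund_disc_sqr_factor D0 Ddisc nfund.
have D10 : D1 != 0 by apply: contraNneq D0 => D10; rewrite D1E D10 mul0r.
have D1n : (`|D1| <= n)%N.
  have D1pos : (0 < `|D1|)%N by rewrite absz_gt0.
  have qq4 : (4 <= q * q)%N by rewrite (@leq_mul 2 2).
  move: Dn; rewrite D1E abszM /= => Dn; nia.
have [L [d [L0 D1dE fund]]] := IHn D1 D1n D10 D1disc.
exists (L * q)%N, d; split => //; first by rewrite muln_gt0 L0 ltnW.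
by rewrite D1E D1dE -mulrA -PoszM mulnACA.
Qed.

Lemma disc_cond_spec D : D != 0 -> is_disc D ->
  [/\ (0 < disc_cond D)%N, D = disc_fund D * (disc_cond D * disc_cond D)%N%:Z
    & fund_disc (disc_fund D)].
Proof.
move=> D0 Ddisc; have [L [d [L0 DE fund]]] := fund_disc_decomp D0 Ddisc.
pose P (L : nat) := ((L * L)%N %| `|D|)%N && fund_disc (divz D (L * L)%N%:Z).
have LL0 : (0 < L * L)%N by rewrite muln_gt0 L0.
have LD : (L < `|D|.+1)%N.
  rewrite ltnS (leq_trans (leq_pmulr _ L0)) // DE abszM /= leq_pmull //.
  by rewrite absz_gt0; apply: contraNneq D0 => d0; rewrite DE d0 mul0r.
have PL : P L by rewrite /P DE abszM dvdn_mull //= mulzK // -lt0n.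
rewrite /disc_fund /disc_cond big_geq_mkord.
have nonempty : (0 < #|[pred i : 'I_(`|D|.+1) | P i && (1 <= i)%N]|)%N.
  by apply/card_gt0P; exists (Ordinal LD); rewrite inE /= PL L0.
have [i] := eq_bigmax_cond (fun i : 'I_(`|D|.+1) => val i) nonempty.
rewrite inE => /andP[/andP[iD ifund] i1] ->.
by split=> //; rewrite divzK // dvdzE.
Qed.

Lemma kronecker_prod_primes a n N : (0 < n)%N -> (n < N)%N ->
  kronecker a n = \prod_(p < N | prime p) kron_prime a p ^+ logn p n.
Proof.
move=> n0 nN; rewrite /kronecker (gtn_eqF n0) -(filter_pi_of nN) big_filter.
rewrite -(big_mkord (fun p => prime p) (fun p => kron_prime a p ^+ logn p n)).
rewrite big_mkcond [RHS]big_mkcond /=.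
apply: eq_bigr => p _; rewrite /= mem_primes n0 /=.
have [pp /= | //] := boolP (prime p); case: ifPn => // pn.
by rewrite logn_coprime // prime_coprime.
Qed.

Lemma is_square_modP c p : (0 < p)%N ->
  reflect (exists x : int, (p%:Z %| x * x - c)%Z)
          [exists x : 'I_p, (x * x %% p)%N == `|modz c p|%N].
Proof.
move=> p0; have c_mod_ge0 : 0 <= modz c p by rewrite modz_ge0 // -lt0n.
apply: (iffP existsP) => [[x /eqP xx] | [x xx]].
  exists x; rewrite -eqz_mod_dvd -PoszM modz_nat.
  by apply/eqP; rewrite xx gez0_abs.
have xmod_ge0 : 0 <= modz x p by rewrite modz_ge0 // -lt0n.
exists (Ordinal (ltn_pmod `|modz x p| p0)) => /=.
apply/eqP; rewrite modnMm; apply/eqP; rewrite -eqz_nat -modz_nat PoszM.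
by rewrite !gez0_abs // modzMml modzMmr eqz_mod_dvd.
Qed.

Lemma legendre_mod a b p : (a = b %[mod p%:Z])%Z -> legendre a p = legendre b p.
Proof. by rewrite /legendre => ->. Qed.

Lemma legendre_dvd a p : (p%:Z %| a)%Z -> legendre a p = 0.
Proof. by move/dvdz_mod0P; rewrite /legendre => ->. Qed.

Lemma legendreM_sqr a w p : prime p -> ~~ (p%:Z %| w)%Z ->
  legendre (a * (w * w)) p = legendre a p.
Proof.
move=> pp pw; have p0 := prime_gt0 pp.
have mod_eq0 c : (`|modz c p| == 0)%N = (p%:Z %| c)%Z.
  by rewrite absz_eq0; apply/eqP/dvdz_mod0P.
have pw' : (p %| `|w|)%N = false by exact: negbTE pw.
have dvd_aww : (p%:Z %| a * (w * w))%Z = (p%:Z %| a)%Z.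
  by rewrite !dvdzE !abszM !Euclid_dvdM // pw' !orbF.
have [u [v uv]] := Bezoutz w p.
have uw1 : u * w - 1 = - v * p%:Z.
  have /eqP wp1 : coprime `|w| p by rewrite coprime_sym prime_coprime // pw'.
  have -> : - v * p%:Z = u * w - (u * w + v * p%:Z) by ring.
  by rewrite uv /gcdz /= wp1.
rewrite /legendre !mod_eq0 dvd_aww; case: ifP => // _; congr (if _ then _ else _).
apply/idP/idP => /(is_square_modP _ p0) [x px]; apply/(is_square_modP _ p0).
  exists (x * u).
  have -> : x * u * (x * u) - a =
            u * u * (x * x - a * (w * w)) + a * (u * w + 1) * (u * w - 1) by ring.
  by rewrite uw1 rpredD ?dvdz_mull ?dvdzz.
exists (x * w).
have -> : x * w * (x * w) - a * (w * w) = w * w * (x * x - a) by ring.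
exact: dvdz_mull.
Qed.

Lemma kron2_mod a b : (a = b %[mod 8])%Z -> kron2 a = kron2 b.
Proof.
move=> ab; rewrite /kron2 ab.
by have -> : (a \in dvdz 2) = (b \in dvdz 2) by apply/idP/idP; rewrite !unfold_in /=; lia.
Qed.

Lemma kron2_dvd a : (2 %| a)%Z -> kron2 a = 0.
Proof. by rewrite /kron2 => ->. Qed.

Definition logz (p : nat) (D : int) : nat := logn p `|D|.

Definition pcofactor (p : nat) (D : int) : int := divz D (p ^ logz p D)%N%:Z.

Lemma pfactor_pcofactorE p D : D = (p ^ logz p D)%N%:Z * pcofactor p D.
Proof. by rewrite mulrC divzK // dvdzE /= pfactor_dvdnn. Qed.

Lemma pcofactor_ndvd p D : prime p -> D != 0 -> ~~ (p%:Z %| pcofactor p D)%Z.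
Proof.
move=> pp D0; apply/negP => /dvdzP [c cE].
have : (p ^ (logz p D).+1 %| `|D|)%N.
  by rewrite {2}(pfactor_pcofactorE p D) cE expnSr abszM abszM /= mulnCA dvdn_mull.
by rewrite pfactor_dvdn ?absz_gt0 // ltnn.
Qed.

Lemma logz_pfactorM p v u : prime p -> ~~ (p%:Z %| u)%Z ->
  logz p ((p ^ v)%N%:Z * u) = v.
Proof.
move=> pp pu; have u0 : (0 < `|u|)%N by rewrite absz_gt0; apply: contraNneq pu => ->.
have pv0 : (0 < p ^ v)%N by rewrite expn_gt0 prime_gt0.
by rewrite /logz abszM /= lognM // pfactorK // logn_coprime ?addn0 // prime_coprime.
Qed.

Lemma pcofactor_pfactorM p v u : prime p -> ~~ (p%:Z %| u)%Z ->
  pcofactor p ((p ^ v)%N%:Z * u) = u.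
Proof.
move=> pp pu; rewrite /pcofactor logz_pfactorM // mulrC mulzK //.
by rewrite -lt0n expn_gt0 prime_gt0.
Qed.

Lemma fund_disc_logz_odd p d : prime p -> p != 2%N -> fund_disc d ->
  d != 0 /\ (logz p d <= 1)%N.
Proof.
move=> pp p2 fund; have p1 := prime_gt1 pp.
have sqf_logz k : sqfree_int k -> k != 0 /\ (logz p k <= 1)%N.
  move=> sqf; have k0 : k != 0 by case/andP: sqf.
  split=> //; rewrite leqNgt -(pfactor_dvdn 2) ?absz_gt0 //.
  by rewrite -mulnn sqfree_intP.
case/orP: fund => [/andP[_ sqf] | /andP[/andP[d4 _] sqf]]; first exact: sqf_logz.
have [k0 k1] := sqf_logz _ sqf; have dE : d = divz d 4 * 4 by rewrite divzK.
have p4 : coprime p 4.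
  by rewrite (_ : 4 = 2 ^ 2)%N // coprimeXr // prime_coprime // dvdn_prime2.
split; first by rewrite dE mulf_neq0.
by rewrite /logz dE abszM lognM ?absz_gt0 // (logn_coprime p4) addn0.
Qed.

Lemma fund_disc_2adic d : fund_disc d ->
  [\/ modz d 4 = 1, exists2 e, d = 4 * e & modz e 4 = 3
    | exists2 e, d = 8 * e & modz e 2 = 1].
Proof.
case/orP=> [/andP[/eqP d1 _] | /andP[/andP[d4 e23] _]]; first by constructor 1.
have dE : d = 4 * divz d 4 by move: d4; rewrite unfold_in /=; lia.
move: e23; rewrite !inE => /orP[/eqP e2 | /eqP e3].
  by constructor 3; exists (divz (divz d 4) 2); lia.
by constructor 2; exists (divz d 4).
Qed.

(* For [D = d L^2] with [d] fundamental, [v = v_p(D)] and [u] the [p]-free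
   part of [D], these are [v_p(L)] and [(d/p)]; see [disc_local]. *)
Definition cond_logn (p v : nat) (u : int) : nat :=
  if p == 2%N then
    if odd v then (v - 3)./2 else if modz u 4 == 1 then v./2 else (v./2).-1
  else v./2.

Definition fund_kron (p v : nat) (u : int) : int :=
  if odd v then 0
  else if p == 2%N then (if modz u 4 == 1 then kron2 u else 0)
  else legendre u p.

Lemma logz_pcofactor_disc p b a d d0 L' : prime p ->
  d = (p ^ b)%N%:Z * d0 -> ~~ (p%:Z %| d0)%Z -> coprime p L' ->
  let D := d * ((L' * p ^ a) * (L' * p ^ a))%N%:Z in
  logz p D = (b + 2 * a)%N /\ pcofactor p D = d0 * (L' * L')%N%:Z.
Proof.
move=> pp dE pd0 pL' D.
have DE : D = (p ^ (b + 2 * a))%N%:Z * (d0 * (L' * L')%N%:Z).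
  by rewrite /D dE mul2n -addnn !expnD !PoszM; ring.
have pu : ~~ (p%:Z %| d0 * (L' * L')%N%:Z)%Z.
  have pL'F : (p %| L')%N = false by apply/negbTE; rewrite -prime_coprime.
  by rewrite dvdzE !abszM /= !Euclid_dvdM // pL'F !orbF.
by rewrite DE logz_pfactorM ?pcofactor_pfactorM.
Qed.

Lemma disc_local_odd p a d L' : prime p -> p != 2%N -> coprime p L' -> fund_disc d ->
  let D := d * ((L' * p ^ a) * (L' * p ^ a))%N%:Z in
  a = cond_logn p (logz p D) (pcofactor p D) /\
  kron_prime d p = fund_kron p (logz p D) (pcofactor p D).
Proof.
move=> pp p2 pL' fund D; have [d0 b1] := fund_disc_logz_odd pp p2 fund.
have dE := pfactor_pcofactorE p d.
have [-> ->] := logz_pcofactor_disc a pp dE (pcofactor_ndvd pp d0) pL'.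
rewrite /cond_logn /fund_kron /kron_prime (negbTE p2).
move: dE; case: (logz p d) b1 => [|[|//]] _ dE; split; try lia.
  rewrite add0n mul2n odd_double PoszM legendreM_sqr -?prime_coprime //.
  by rewrite {1}dE mul1r.
by rewrite oddD mul2n odd_double legendre_dvd // dE dvdz_mulr.
Qed.

Lemma disc_local_two a d L' : coprime 2 L' -> fund_disc d ->
  let D := d * ((L' * 2 ^ a) * (L' * 2 ^ a))%N%:Z in
  a = cond_logn 2 (logz 2 D) (pcofactor 2 D) /\
  kron_prime d 2 = fund_kron 2 (logz 2 D) (pcofactor 2 D).
Proof.
move=> L'odd fund D; have /sqr_odd_mod8 [r rE] : odd L' by rewrite -coprime2n.
have pr2 : prime 2 by [].
rewrite /cond_logn /fund_kron /kron_prime /=.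
case: (fund_disc_2adic fund) => [d1 | [e dE e3] | [e dE e1]].
- have d2 : ~~ (2%:Z %| d)%Z by apply/negP; rewrite unfold_in /=; lia.
  have [-> ->] := logz_pcofactor_disc (b := 0) a pr2 (esym (mul1r d)) d2 L'odd.
  have -> : modz (d * (L' * L')%N%:Z) 4 == 1 by rewrite rE; lia.
  rewrite add0n mul2n odd_double /=; split; first lia.
  by apply: kron2_mod; rewrite rE; lia.
- have e2 : ~~ (2%:Z %| e)%Z by apply/negP; rewrite unfold_in /=; lia.
  have [-> ->] := logz_pcofactor_disc (b := 2) a pr2 dE e2 L'odd.
  have -> : modz (e * (L' * L')%N%:Z) 4 == 1 = false by rewrite rE; lia.
  rewrite oddD mul2n odd_double /= kron2_dvd; first by split=> //; lia.
  by rewrite dE dvdz_mulr.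
- have e2 : ~~ (2%:Z %| e)%Z by apply/negP; rewrite unfold_in /=; lia.
  have [-> _] := logz_pcofactor_disc (b := 3) a pr2 dE e2 L'odd.
  rewrite oddD mul2n odd_double /= kron2_dvd; first by split=> //; lia.
  by rewrite dE (dvdz_mulr _ (isT : (2%:Z %| 8)%Z)).
Qed.

Lemma disc_local p d L : prime p -> (0 < L)%N -> fund_disc d ->
  let D := d * (L * L)%N%:Z in
  logn p L = cond_logn p (logz p D) (pcofactor p D) /\
  kron_prime d p = fund_kron p (logz p D) (pcofactor p D).
Proof.
move=> pp L0 fund D; have [L' pL' LE] := pfactor_coprime pp L0.
set a := logn p L in LE *; rewrite /D LE.
have [p2 | p2] := eqVneq p 2%N; last exact: disc_local_odd.
by move: pL'; rewrite p2 => pL'; apply: disc_local_two.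
Qed.

Definition local_factor (p k v : nat) (u : int) : int :=
  fund_kron p v u ^+ (k - minn k (cond_logn p v u)).

Definition psi_local (p k : nat) (D : int) : int :=
  if D == 0 then 1 else local_factor p k (logz p D) (pcofactor p D).

Lemma psi_local0 p D : psi_local p 0 D = 1.
Proof. by rewrite /psi_local /local_factor; case: ifP. Qed.

Lemma psi_prod_local D m N : is_disc D -> (0 < m)%N -> (m < N)%N ->
  psi D m = \prod_(p < N | prime p) psi_local p (logn p m) D.
Proof.
move=> Ddisc m0 mN; rewrite /psi /psi_local.
have [D0 | D0] := eqVneq D 0; first by rewrite big1.
have [L0 DE fund] := disc_cond_spec D0 Ddisc.
have g0 : (0 < gcdn m (disc_cond D))%N by rewrite gcdn_gt0 m0.
rewrite (@kronecker_prod_primes _ _ N); first last.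
- exact: leq_ltn_trans (leq_div _ _) mN.
- by rewrite divn_gt0 // dvdn_leq ?dvdn_gcdl.
apply: eq_bigr => p pp; rewrite logn_div ?dvdn_gcdl // logn_gcd //.
by have [-> ->] := disc_local pp L0 fund; rewrite -DE.
Qed.

Lemma psiM D m1 m2 : is_disc D -> (0 < m1)%N -> (0 < m2)%N -> coprime m1 m2 ->
  psi D (m1 * m2) = psi D m1 * psi D m2.
Proof.
move=> Ddisc m10 m20 co.
have m0 : (0 < m1 * m2)%N by rewrite muln_gt0 m10.
rewrite !(@psi_prod_local D _ (m1 * m2).+1) ?ltnS ?leq_pmull ?leq_pmulr //.
rewrite -big_split; apply: eq_bigr => p pp /=; rewrite lognM //.
have [pm1 | pm1] := boolP (p %| m1)%N.
  by rewrite (@logn_coprime p m2) ?(coprime_dvdl pm1 co) // psi_local0 mulr1 addn0.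
by rewrite (@logn_coprime p m1) ?prime_coprime // psi_local0 mul1r.
Qed.

(* [p ^ period_exp p (logn p m)] is the [p]-part of [4 m^2]. *)
Definition period_exp (p k : nat) : nat :=
  if p == 2%N then (2 * k + 2)%N else (2 * k)%N.

Lemma local_factor_high p k v u : (period_exp p k <= v)%N -> local_factor p k v u = 1.
Proof.
move=> kv; rewrite /local_factor.
suff /minn_idPl -> : (k <= cond_logn p v u)%N by rewrite subnn expr0.
move: kv; rewrite /period_exp /cond_logn.
have := odd_double_half v.
by case: (p == 2%N); case: (odd v); rewrite -?muln2 /=; [|case: (_ == 1)| |]; lia.
Qed.

Lemma local_factor_congr p k v u u' : (v < period_exp p k)%N ->
  (u' = u %[mod (p ^ (period_exp p k - v))%N%:Z])%Z ->
  local_factor p k v u = local_factor p k v u'.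
Proof.
move=> ve uu'.
have uu's s : (s <= period_exp p k - v)%N -> (u' = u %[mod (p ^ s)%N%:Z])%Z.
  move: uu' => /eqP; rewrite !eqz_mod_dvd => uu' sle.
  apply/eqP; rewrite eqz_mod_dvd; apply: dvdz_trans uu'.
  by rewrite dvdzE /= dvdn_exp2l.
rewrite /local_factor /fund_kron /cond_logn.
case: ifP => // even_v; have := odd_double_half v; rewrite even_v add0n -muln2 => vE.
have [p2 | p2] := eqVneq p 2%N; last first.
  rewrite (@legendre_mod u' u) //; have := uu's 1%N; rewrite expn1; apply.
  by move: ve; rewrite /period_exp (negbTE p2); lia.
subst p; have u'4 : modz u' 4 = modz u 4.
  by apply: (uu's 2%N); move: ve; rewrite /period_exp /=; lia.
rewrite /= u'4; case: ifP => // _; have [kv | kv] := leqP k v./2.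
  by rewrite subnn !expr0.
congr (_ ^+ _); apply: kron2_mod; symmetry; apply: (uu's 3%N).
by move: ve kv; rewrite /period_exp /=; lia.
Qed.

Lemma psi_local_pfactor_dvd p k X : prime p ->
  ((p ^ period_exp p k)%N%:Z %| X)%Z -> psi_local p k X = 1.
Proof.
rewrite /psi_local => pp pX; case: eqP => // /eqP X0.
by apply: local_factor_high; rewrite /logz -pfactor_dvdn ?absz_gt0.
Qed.

Lemma psi_local_per p k D D' : prime p ->
  ((p ^ period_exp p k)%N%:Z %| D' - D)%Z -> psi_local p k D = psi_local p k D'.
Proof.
move=> pp DD'; set e := period_exp p k in DD' *.
have [pD | pD] := boolP ((p ^ e)%N%:Z %| D)%Z.
  by rewrite !psi_local_pfactor_dvd // -(subrK D D') rpredD.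
have D0 : D != 0 by apply: contraNneq pD => ->; apply: dvdz0.
have DE := pfactor_pcofactorE p D; set v := logz p D in DE; set u := pcofactor p D in DE.
have ve : (v < e)%N.
  rewrite ltnNge; apply: contra pD => ev; rewrite DE dvdz_mulr // dvdzE /=.
  by rewrite dvdn_exp2l.
have [j jE] := dvdzP DD'; set u' := u + j * (p ^ (e - v))%N%:Z.
have D'E : D' = (p ^ v)%N%:Z * u'.
  rewrite -[D'](subrK D) jE {1}DE -{1}(subnKC (ltnW ve)) expnD PoszM /u'; ring.
have pu' : ~~ (p%:Z %| u')%Z.
  apply: contra (pcofactor_ndvd pp D0) => pu'.
  rewrite -/u (_ : u = u' - j * (p ^ (e - v))%N%:Z); last by rewrite addrK.
  by rewrite rpredB ?dvdz_mull // dvdzE /= -{1}(expn1 p) dvdn_exp2l ?subn_gt0.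
have D'0 : D' != 0.
  rewrite D'E mulf_neq0 //; last by apply: contraNneq pu' => ->; apply: dvdz0.
  by rewrite eqz_nat -lt0n expn_gt0 prime_gt0.
rewrite /psi_local (negbTE D0) (negbTE D'0) D'E logz_pfactorM // pcofactor_pfactorM //.
by apply: local_factor_congr => //; rewrite /u' addrC modzMDl.
Qed.

Lemma pfactor_period_exp_dvd p m : (p ^ period_exp p (logn p m) %| 4 * (m * m))%N.
Proof.
have pm := pfactor_dvdnn p m; rewrite /period_exp.
case: eqP => [p2 | _]; rewrite mul2n -addnn ?expnD; last by rewrite dvdn_mull // dvdn_mul.
by rewrite p2 in pm *; rewrite mulnC dvdn_mul // dvdn_mul.
Qed.

Lemma psi_per D D' m : is_disc D -> is_disc D' -> (0 < m)%N ->
  ((4 * (m * m))%N%:Z %| D' - D)%Z -> psi D m = psi D' m.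
Proof.
move=> Ddisc D'disc m0 DD'; rewrite !(@psi_prod_local _ m m.+1) //.
apply: eq_bigr => p pp; apply: psi_local_per => //; apply: dvdz_trans DD'.
by rewrite dvdzE pfactor_period_exp_dvd.
Qed.

Lemma sum_chinese (R : nmodType) a b (F : nat -> nat -> R) : coprime a b ->
  \sum_(n < a * b) F (n %% a)%N (n %% b)%N = \sum_(x < a) \sum_(y < b) F x y.
Proof.
move=> co; have [-> | a0] := posnP a; first by rewrite mul0n !big_ord0.
have [-> | b0] := posnP b.
  by rewrite muln0 big_ord0 big1 // => x _; rewrite big_ord0.
have ab0 : (0 < a * b)%N by rewrite muln_gt0 a0.
pose f (n : 'I_(a * b)) := (Ordinal (ltn_pmod n a0), Ordinal (ltn_pmod n b0)).
pose g (xy : 'I_a * 'I_b) := Ordinal (ltn_pmod (chinese a b xy.1 xy.2) ab0).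
have fK : cancel f g by move=> n; apply: val_inj; rewrite /= -chinese_mod // modn_small.
have gK : cancel g f.
  move=> [x y]; congr pair; apply: val_inj => /=.
  - by rewrite modn_dvdm ?dvdn_mulr // chinese_modl // modn_small.
  - by rewrite modn_dvdm ?dvdn_mull // chinese_modr // modn_small.
by rewrite pair_big (reindex f) //=; exists g => // ? _.
Qed.

Lemma psi1 D : psi D 1 = 1.
Proof. by rewrite /psi; case: ifP => // _; rewrite gcd1n divnn /kronecker /= big_nil. Qed.

Definition psit_term (l : nat) (t : int) (m n : nat) : rat :=
  if coprime n m then (psi (t ^+ 2 - 4 * l%:Z * n%:Z) m)%:~R else 0.

Lemma psitE l t m :
  psit l t m = (totient (m * m))%:R^-1 * \sum_(n < m * m) psit_term l t m n.
Proof. by rewrite /psit big_mkcond. Qed.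

Lemma psi_sqr_sub_modn (t : int) (l n m : nat) : (0 < m)%N ->
  psi (t ^+ 2 - 4 * l%:Z * n%:Z) m = psi (t ^+ 2 - 4 * l%:Z * (n %% (m * m))%N%:Z) m.
Proof.
move=> m0; apply: psi_per; rewrite // -!mulrA ?is_disc_sqr_sub4 //.
rewrite {2}(divn_eq n (m * m)) PoszD PoszM; apply/dvdzP.
by exists (l%:Z * (n %/ (m * m))%N%:Z); rewrite PoszM; ring.
Qed.

Lemma psit_termM l t m1 m2 n : (0 < m1)%N -> (0 < m2)%N -> coprime m1 m2 ->
  psit_term l t (m1 * m2) n =
  psit_term l t m1 (n %% (m1 * m1)) * psit_term l t m2 (n %% (m2 * m2)).
Proof.
move=> m10 m20 co; rewrite /psit_term coprimeMr.
rewrite -[coprime (n %% _) m1]coprime_modl -[coprime (n %% _) m2]coprime_modl.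
rewrite !modn_dvdm ?dvdn_mull // !coprime_modl.
case: (coprime n m1); last by rewrite mul0r.
case: (coprime n m2); last by rewrite mulr0.
rewrite /= psiM //; last by rewrite -mulrA is_disc_sqr_sub4.
by rewrite intrM (psi_sqr_sub_modn _ _ n m10) (psi_sqr_sub_modn _ _ n m20).
Qed.

Theorem lemma3p1 (l : nat) (t : int) :
  prime l -> odd l ->
  psit l t 1 = 1 /\
  (forall m1 m2 : nat, (0 < m1)%N -> (0 < m2)%N -> coprime m1 m2 ->
     psit l t (m1 * m2) = psit l t m1 * psit l t m2).
Proof.
move=> _ _; split.
  by rewrite psitE big_ord1 /psit_term /= psi1 mul1n (_ : totient 1 = 1%N).
move=> m1 m2 m10 m20 co.
have co_sq : coprime (m1 * m1) (m2 * m2) by rewrite coprimeMl !coprimeMr co.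
rewrite !psitE mulnACA totient_coprime // natrM invfM.
under eq_bigr => n _ do rewrite psit_termM //.
rewrite (sum_chinese (fun x y => psit_term l t m1 x * psit_term l t m2 y)) //.
by rewrite -big_distrlr /= mulrACA.
Qed.
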